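(* Let $D$ be an $S$-subalgebra of $\mathbb{C}\langle u,v\rangle$ containing $s_1=uv+vu$, and let $b\ge 1$, $c\ge 0$ be integers such that $p_{(b,c)}=u^bv^c+v^bu^c\in D$. Then $uvu^bv^c+vuv^bu^c\in D$ and $p_{(b+1,c+1)}=u^{b+1}v^{c+1}+v^{b+1}u^{c+1}\in D$. In particular, if $D$ contains $s_1$, then $D$ contains $s_a=u^av^a+v^au^a$ for every $a\ge 1$.
   Context: $\mathbb{C}\langle u,v\rangle$ is the free associative unital algebra over $\mathbb C$ on noncommuting $u,v$, with homogeneous components $\mathbb{C}\langle u,v\rangle^{(k)}$ of total degree $k$. For each $k$, $\mathrm{Sym}(k)$ acts on $\mathbb{C}\langle u,v\rangle^{(k)}$ by permuting positions: $(x_{i_1}\cdots x_{i_k})\circ\pi=x_{i_{\pi^{-1}(1)}}\cdots x_{i_{\pi^{-1}(k)}}$ for monomials with $x_{i_j}\in\{u,v\}$, extended linearly. An $S$-subalgebra is a graded unital subalgebra $F=\bigoplus_kF^{(k)}$ with $F^{(k)}\circ\mathrm{Sym}(k)=F^{(k)}$ for all $k$. *)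

From HB Require Import structures.
From mathcomp Require Import all_boot all_order all_algebra all_fingroup.
From mathcomp Require Import Rstruct complex.
From Stdlib Require Rdefinitions.
Set Implicit Arguments. Unset Strict Implicit. Unset Printing Implicit Defensive.
Import Order.TTheory GRing.Theory Num.Theory.
Local Open Scope ring_scope.

Definition CC : fieldType := (Rdefinitions.R)[i].

(* Letters: false = u, true = v.  A word (monomial) of length k is a map
   'I_k -> bool : position i carries the letter x_{i}. *)
Definition word (k : nat) := {ffun 'I_k -> bool}.

(* The homogeneous component C<u,v>^(k): linear combinations of words of length
   k, represented by their coefficient function  (word k -> C). *)
Definition hcomp (k : nat) := {ffun word k -> CC}.

Definition letters k (w : word k) : seq bool := [seq w i | i <- enum 'I_k].

(* The monomial given by a sequence of letters s, viewed in degree k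
   (s should have size k). *)
Definition mono (k : nat) (s : seq bool) : hcomp k :=
  [ffun w : word k => (letters w == s)%:R].

(* Product C<u,v>^(k) x C<u,v>^(l) -> C<u,v>^(k+l) (concatenation of words,
   extended bilinearly): the coefficient of a word w of length k+l is
   f(first k letters of w) * g(last l letters of w). *)
Definition hmul k l (f : hcomp k) (g : hcomp l) : hcomp (k + l)%N :=
  [ffun w : word (k + l) =>
     f [ffun i => w (lshift l i)] * g [ffun j => w (rshift k j)]].

Definition hone : hcomp 0%N := [ffun _ => 1].

(* Right action of Sym(k):
   (x_{i_1}...x_{i_k}) o pi = x_{i_{pi^-1(1)}} ... x_{i_{pi^-1(k)}},
   so the coefficient of the word w' in f o pi is the coefficient of w' o pi
   in f. *)
Definition hact k (f : hcomp k) (pi : 'S_k) : hcomp k :=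
  [ffun w : word k => f [ffun i => w (pi i)]].

(* A graded subspace F = (+)_k F^(k) of C<u,v> is given by its homogeneous
   components F k; it is an S-subalgebra when each F^(k) is a linear subspace,
   1 \in F^(0), F^(k) F^(l) \subseteq F^(k+l), and F^(k) o Sym(k) = F^(k). *)
Definition S_subalgebra (F : forall k, {pred hcomp k}) : Prop :=
  (forall k, 0 \in F k) /\
  (forall k (f g : hcomp k), f \in F k -> g \in F k -> f + g \in F k) /\
  (forall k (a : CC) (f : hcomp k), f \in F k -> a *: f \in F k) /\
  hone \in F 0%N /\
  (forall k l (f : hcomp k) (g : hcomp l),
      f \in F k -> g \in F l -> hmul f g \in F (k + l)%N) /\
  (forall k (f : hcomp k) (pi : 'S_k), f \in F k -> hact f pi \in F k).

Definition pbc (b c : nat) : hcomp (b + c)%N :=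
  mono (b + c)%N (nseq b false ++ nseq c true) +
  mono (b + c)%N (nseq b true ++ nseq c false).

Definition s1 : hcomp 2%N := mono 2%N [:: false; true] + mono 2%N [:: true; false].

Definition sa (a : nat) : hcomp (a + a)%N := pbc a a.

Definition uvpbc (b c : nat) : hcomp (2 + (b + c))%N :=
  mono (2 + (b + c))%N ([:: false; true] ++ nseq b false ++ nseq c true) +
  mono (2 + (b + c))%N ([:: true; false] ++ nseq b true ++ nseq c false).

(* Multiplying p_(b,c) by s_1 = uv + vu gives the four monomials x x' y^b y'^c with
   {x, x'} = {y, y'} = {u, v}.  The transposition of the first and third letters fixes the
   two with x = y and sends the other two to the images of those two under the transposition
   of the second and third letters, which in turn fixes the two with x <> y.  Hence, for
   X = s_1 p_(b,c), X + X o (1 3) - X o (2 3) = 2 (uvu^bv^c + vuv^bu^c).  When b >= 1,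
   transposing the second letter with the last letter of the block y^b turns this element
   into p_(b+1,c+1); starting from s_1 = p_(1,1), induction gives every s_a. *)

From mathcomp Require Import all_boot all_algebra all_fingroup.
From mathcomp Require Import Rstruct complex ring.

Import GRing.Theory Num.Theory.
Local Open Scope ring_scope.

Definition monomial {k : nat} (t : 'I_k -> bool) : hcomp k :=
  [ffun w => (w == finfun t)%:R].

Lemma eq_monomial k (t1 t2 : 'I_k -> bool) : t1 =1 t2 -> monomial t1 = monomial t2.
Proof. by move=> eq_t; rewrite /monomial (eq_ffun _ eq_t). Qed.

Lemma monoE k s : size s = k -> mono k s = monomial (fun i : 'I_k => nth false s i).
Proof.
move=> size_s; apply/ffunP=> w; rewrite !ffunE; congr (nat_of_bool _)%:R.
apply/eqP/eqP => [<-|->].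
  by apply/ffunP=> i; rewrite ffunE /letters (nth_map i) ?size_enum_ord ?nth_ord_enum.
apply: (@eq_from_nth _ false); rewrite size_map size_enum_ord // => i lt_i_k.
by rewrite (nth_map (Ordinal lt_i_k)) ?size_enum_ord // ffunE nth_enum_ord.
Qed.

Lemma hact_monomial k t (pi : 'S_k) : hact (monomial t) pi = monomial (t \o pi^-1%g).
Proof.
apply/ffunP=> w; rewrite !ffunE; congr (nat_of_bool _)%:R.
apply/eqP/eqP => /ffunP eq_w; apply/ffunP=> i; rewrite !ffunE /=.
  by have := eq_w (pi^-1 i)%g; rewrite !ffunE permKV.
by have := eq_w (pi i); rewrite !ffunE /= permK.
Qed.

Lemma hmul_monomial k l (t1 : 'I_k -> bool) (t2 : 'I_l -> bool) :
  hmul (monomial t1) (monomial t2) =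
  monomial (fun i => match split i with inl j => t1 j | inr j => t2 j end).
Proof.
apply/ffunP=> w; rewrite !ffunE -natrM mulnb; congr (nat_of_bool _)%:R.
apply/andP/eqP => [[/eqP/ffunP eq_l /eqP/ffunP eq_r]|->].
  apply/ffunP=> i; rewrite ffunE -(splitK i).
  by case: (split i) => j; rewrite ?unsplitK; [move: (eq_l j)|move: (eq_r j)]; rewrite !ffunE.
by split; apply/eqP/ffunP=> j; rewrite !ffunE ?(unsplitK (inl _ j)) ?(unsplitK (inr _ j)).
Qed.

Lemma hmul_mono k l s s' : size s = k -> size s' = l ->
  hmul (mono k s) (mono l s') = mono (k + l) (s ++ s').
Proof.
move=> size_s size_s'; rewrite !monoE ?size_cat ?size_s ?size_s' // hmul_monomial.
apply: eq_monomial => i; case: splitP => j ->; rewrite nth_cat size_s ?ltn_ord //.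
by rewrite ltnNge leq_addr addKn.
Qed.

Lemma hmulDl k l (f g : hcomp k) (h : hcomp l) : hmul (f + g) h = hmul f h + hmul g h.
Proof. by apply/ffunP=> w; rewrite !ffunE mulrDl. Qed.

Lemma hmulDr k l (f : hcomp k) (g h : hcomp l) : hmul f (g + h) = hmul f g + hmul f h.
Proof. by apply/ffunP=> w; rewrite !ffunE mulrDr. Qed.

Lemma hactD k (f g : hcomp k) pi : hact (f + g) pi = hact f pi + hact g pi.
Proof. by apply/ffunP=> w; rewrite !ffunE. Qed.

Definition swap_nth (s : seq bool) (i j : nat) :=
  set_nth false (set_nth false s i (nth false s j)) j (nth false s i).

Lemma size_swap_nth s i j :
  (i < size s)%N -> (j < size s)%N -> size (swap_nth s i j) = size s.
Proof. by move=> lt_i lt_j; rewrite !size_set_nth !(maxn_idPr _). Qed.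

Lemma nth_swap_nth s i j (n : nat) :
  nth false (swap_nth s i j) n = nth false s (if n == j then i else if n == i then j else n).
Proof. by rewrite nth_set_nth /=; case: ifP => // _; rewrite nth_set_nth /=; case: ifP. Qed.

Lemma hact_mono_tperm k s i j (lt_i : (i < k)%N) (lt_j : (j < k)%N) : size s = k ->
  hact (mono k s) (tperm (Ordinal lt_i) (Ordinal lt_j)) = mono k (swap_nth s i j).
Proof.
move=> size_s; rewrite !monoE ?size_swap_nth ?size_s // hact_monomial tpermV.
apply: eq_monomial => n /=; rewrite nth_swap_nth.
case: tpermP => [->|->|ne_i ne_j] /=; rewrite ?eqxx.
- by case: eqP => [->|].
- by [].
- case: eqP => [eq_nj|_]; first by case: ne_j; exact: val_inj.
  by case: eqP => // eq_ni; case: ne_i; exact: val_inj.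
Qed.

Lemma set_nth_nseq_cat T (x0 x y : T) n s :
  set_nth x0 (nseq n x ++ s) n y = nseq n x ++ set_nth x0 s 0 y.
Proof. by elim: n => //= n ->. Qed.

Lemma swap_nth_uv (x y : bool) b c :
  swap_nth ([:: x; y] ++ nseq b.+1 x ++ nseq c y) 1 b.+2 = nseq b.+2 x ++ nseq c.+1 y.
Proof.
have -> : nseq b.+1 x ++ nseq c y = nseq b x ++ x :: nseq c y by elim: b => //= b ->.
by rewrite /swap_nth /= nth_cat size_nseq ltnn subnn set_nth_nseq_cat.
Qed.

Definition s1_pbc_term (x y : bool) b c : hcomp (2 + (b + c)) :=
  mono (2 + (b + c)) ([:: x; ~~ x] ++ nseq b y ++ nseq c (~~ y)).

Lemma hmul_s1_pbc b c : hmul s1 (pbc b c) =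
  s1_pbc_term false false b c + s1_pbc_term false true b c +
  (s1_pbc_term true false b c + s1_pbc_term true true b c).
Proof. by rewrite hmulDl !hmulDr !hmul_mono // ?size_cat ?size_nseq. Qed.

(* Positions are 0-indexed: these are the transpositions (1 3) and (2 3) of the header. *)
Lemma hact_s1_pbc_term02 x y b c
    (lt0 : (0 < 2 + (b.+1 + c))%N) (lt2 : (2 < 2 + (b.+1 + c))%N) :
  hact (s1_pbc_term x y b.+1 c) (tperm (Ordinal lt0) (Ordinal lt2)) =
  mono (2 + (b.+1 + c)) [:: y, ~~ x, x & nseq b y ++ nseq c (~~ y)].
Proof. by rewrite hact_mono_tperm // ?size_cat ?size_nseq. Qed.

Lemma hact_s1_pbc_term12 x y b c
    (lt1 : (1 < 2 + (b.+1 + c))%N) (lt2 : (2 < 2 + (b.+1 + c))%N) :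
  hact (s1_pbc_term x y b.+1 c) (tperm (Ordinal lt1) (Ordinal lt2)) =
  mono (2 + (b.+1 + c)) [:: x, y, ~~ x & nseq b y ++ nseq c (~~ y)].
Proof. by rewrite hact_mono_tperm // ?size_cat ?size_nseq. Qed.

Lemma hact_uvpbc {b c}
    (lt1 : (1 < 2 + (b.+1 + c))%N) (ltb : (b.+2 < 2 + (b.+1 + c))%N) :
  hact (uvpbc b.+1 c) (tperm (Ordinal lt1) (Ordinal ltb)) =
  mono _ (nseq b.+2 false ++ nseq c.+1 true) + mono _ (nseq b.+2 true ++ nseq c.+1 false).
Proof. by rewrite hactD !hact_mono_tperm ?swap_nth_uv // ?size_cat ?size_nseq. Qed.

Section SSubalgebra.

Context {D : forall k, {pred hcomp k}} (D_S : S_subalgebra D).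

Lemma S_rpredD {k} {f g : hcomp k} : f \in D k -> g \in D k -> f + g \in D k.
Proof. by case: D_S => _ [addD _]; apply: addD. Qed.

Lemma S_rpredZ {k} (a : CC) {f : hcomp k} : f \in D k -> a *: f \in D k.
Proof. by case: D_S => _ [_ [scaleD _]]; apply: scaleD. Qed.

Lemma S_rpredB {k} {f g : hcomp k} : f \in D k -> g \in D k -> f - g \in D k.
Proof. by move=> f_in g_in; rewrite -scaleN1r; apply: S_rpredD => //; apply: S_rpredZ. Qed.

Lemma S_rpredM {k l} {f : hcomp k} {g : hcomp l} :
  f \in D k -> g \in D l -> hmul f g \in D (k + l)%N.
Proof. by case: D_S => _ [_ [_ [_ [mulD _]]]]; apply: mulD. Qed.

Lemma S_rpred_act {k} {f : hcomp k} pi : f \in D k -> hact f pi \in D k.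
Proof. by case: D_S => _ [_ [_ [_ [_ actD]]]]; apply: actD. Qed.

Hypothesis s1_in : s1 \in D 2%N.

Lemma S_uvpbc {b c} :
  (1 <= b)%N -> pbc b c \in D (b + c)%N -> uvpbc b c \in D (2 + (b + c))%N.
Proof.
case: b => // b _ pbc_in; set X := hmul s1 (pbc b.+1 c).
have X_in : X \in D _ := S_rpredM s1_in pbc_in.
have lt0 : (0 < 2 + (b.+1 + c))%N by [].
have lt1 : (1 < 2 + (b.+1 + c))%N by [].
have lt2 : (2 < 2 + (b.+1 + c))%N by [].
set tau := tperm (Ordinal lt0) (Ordinal lt2).
set rho := tperm (Ordinal lt1) (Ordinal lt2).
have sum_in : X + hact X tau - hact X rho \in D _.
  by apply: S_rpredB; [apply: S_rpredD|]; rewrite ?S_rpred_act.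
have sumE : X + hact X tau - hact X rho = uvpbc b.+1 c *+ 2.
  rewrite /X hmul_s1_pbc !hactD !hact_s1_pbc_term02 !hact_s1_pbc_term12.
  rewrite /s1_pbc_term /uvpbc /=.
  by apply/ffunP=> w; rewrite !ffunE; ring.
have -> : uvpbc b.+1 c = 2^-1 *: (X + hact X tau - hact X rho).
  by rewrite sumE -scalerMnr scalerMnl -mulr_natr mulVf ?scale1r // pnatr_eq0.
exact: S_rpredZ sum_in.
Qed.

Lemma S_pbc_succ {b c} :
  (1 <= b)%N -> pbc b c \in D (b + c)%N -> pbc b.+1 c.+1 \in D (b.+1 + c.+1)%N.
Proof.
move=> b_gt0 pbc_in; have := S_uvpbc b_gt0 pbc_in.
case: b b_gt0 {pbc_in} => // b _ uv_in.
have lt1 : (1 < 2 + (b.+1 + c))%N by [].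
have ltb : (b.+2 < 2 + (b.+1 + c))%N by rewrite !addSn !ltnS leq_addr.
rewrite /pbc (_ : (b.+2 + c.+1 = 2 + (b.+1 + c))%N) ?addnS // -(hact_uvpbc lt1 ltb).
exact: S_rpred_act.
Qed.

End SSubalgebra.

Theorem mainTheorem4 (D : forall k, {pred hcomp k}) :
  S_subalgebra D -> s1 \in D 2%N ->
  (forall b c : nat, (1 <= b)%N -> pbc b c \in D (b + c)%N ->
     uvpbc b c \in D (2 + (b + c))%N /\ pbc b.+1 c.+1 \in D (b.+1 + c.+1)%N) /\
  (forall a : nat, (1 <= a)%N -> sa a \in D (a + a)%N).
Proof.
move=> D_S s1_in; split=> [b c b_gt0 pbc_in|].
  split; first exact: (S_uvpbc D_S s1_in b_gt0 pbc_in).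
  exact: (S_pbc_succ D_S s1_in b_gt0 pbc_in).
elim=> [//|[_ _|a IHa _]]; first exact: s1_in.
by apply: (S_pbc_succ D_S s1_in _ (IHa isT)).
Qed.
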